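(* Let $0<\beta<1$. There exists a positive strictly increasing function $\eta_1:(0,\infty)\to(0,\infty)$ depending only on $\beta$ such that the following holds. Let $T>0$, $c>0$, $F\in C^0([0,T];[0,\infty))$ and $u\in C^1([0,T];[0,\infty))$ with $$F(t)\ge c\,t^{\frac\beta{1-\beta}},\qquad \dot u(t)\ge F(t)-2u^\beta(t)\quad\text{on }[0,T].$$ Then $u(t)\ge\eta_1(c)\,t^{\frac1{1-\beta}}$ for all $t\in[0,T]$. *)

From HB Require Import structures.
From mathcomp Require Import all_boot all_order all_algebra.
From mathcomp Require Import all_classical all_reals all_analysis.

From HB Require Import structures.
From mathcomp Require Import all_boot all_order all_algebra.
From mathcomp Require Import all_classical all_reals all_analysis.
From mathcomp Require Import ring lra.
Import Order.TTheory GRing.Theory Num.Theory.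
Import numFieldNormedType.Exports.
Local Open Scope classical_set_scope.
Local Open Scope ring_scope.

(* Where [u] dips below [eta t^p], p = 1/(1-beta), we have [u^beta < eta^beta t^(p-1)], so
   [(u - eta t^p)' >= (c - 2 eta^beta - eta p) t^(p-1) > 0] as soon as
   [2 eta^beta + eta p < c]: [eta t^p] is a strict subsolution.  A function that
   starts nonnegative and increases wherever it is negative stays nonnegative, so
   [u >= eta t^p].  Taking [eta = (c/((c+1)(2+p)))^(1/beta)] meets the condition
   and is increasing in [c]. *)

Section Comparison.
Context {R : realType}.

Lemma ge0_of_derive1_gt0_where_neg (g : R -> R) (t : R) :
  0 <= t -> {within `[0, t], continuous g} ->
  (forall x, x \in `]0, t] -> derivable g x 1) ->
  (forall x, x \in `]0, t] -> g x < 0 -> 0 < derive1 g x) ->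
  0 <= g 0 -> 0 <= g t.
Proof.
(* A negative minimum [m] of [g] is reached from the left through points where
   [g < 0], on which [g] increases strictly. *)
move=> t0 cg dg dg_gt0 g0; rewrite leNgt; apply/negP => gt_lt0.
have [m /[dup] + mI gm_min] := EVT_min t0 cg.
rewrite in_itv /= => /andP[m_ge0 m_le_t].
have gm_lt0 : g m < 0.
  by apply: le_lt_trans gt_lt0; apply: gm_min; rewrite in_itv /= t0 lexx.
have m_gt0 : 0 < m.
  by rewrite lt_neqAle m_ge0 andbT; apply: contraTneq gm_lt0 => <-; rewrite -leNgt.
have gD x : 0 < x -> x <= m -> derivable g x 1.
  by move=> x0 xm; apply: dg; rewrite in_itv /= x0 (le_trans xm).
have [e e_gt0 g_lt0_near] : exists2 e : R, 0 < e & forall y, `|m - y| < e -> g y < 0.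
  have gm_cont : {for m, continuous g}.
    exact/differentiable_continuous/derivable1_diffP/gD.
  have [e /= e_gt0 He] := (nbhs_ballP _ _).1 (cvgr_lt _ gm_cont _ gm_lt0).
  by exists e => // y my; apply: He; rewrite -ball_normE.
pose d := Num.min e m.
have [d_gt0 d_le_e] : 0 < d /\ d <= e by rewrite lt_min e_gt0 m_gt0 ge_min lexx.
have d_le_m : d <= m by rewrite ge_min lexx orbT.
pose a := m - d / 2.
have [a_gt0 a_lt_m] : 0 < a /\ a < m by rewrite /a; lra.
have g_lt0_am y : a <= y -> y <= m -> g y < 0.
  by move=> ay ym; apply: g_lt0_near; rewrite ger0_norm ?subr_ge0 // /a in ay *; lra.
have g_incr : {in `[a, m] &, {homo g : x y / x < y}}.
  apply: gtr0_derive1_lt_cc.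
  - by move=> x; rewrite in_itv /= => /andP[ax xm]; apply: gD; lra.
  - move=> x; rewrite in_itv /= => /andP[ax xm]; apply: dg_gt0.
      by rewrite in_itv /=; apply/andP; split; lra.
    by apply: g_lt0_am; lra.
  - apply: derivable_within_continuous => x; rewrite in_itv /= => /andP[ax xm].
    by apply: gD; lra.
have : g a < g m by apply: g_incr; rewrite ?in_itv /= ?lexx ?(ltW a_lt_m).
by rewrite ltNge gm_min // in_itv /= ltW // (le_trans (ltW a_lt_m)).
Qed.

Lemma is_derive_subr_scale_powR (u : R -> R) (eta p x : R) :
  0 < x -> derivable u x 1 ->
  is_derive x 1 (fun y => u y - eta * y `^ p)
    ('D_1 u x - eta * (p * x `^ (p - 1))).
Proof.
move=> x_gt0 /derivableP du.
have := is_deriveB du (is_deriveZ eta (is_derive1_powR p x_gt0)).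
by congr is_derive; apply/funext => y.
Qed.

Lemma continuous_subr_scale_powR (u : R -> R) (eta p t : R) :
  0 < p -> 0 < t -> (forall x, x \in `[0, t] -> derivable u x 1) ->
  {within `[0, t], continuous (fun y => u y - eta * y `^ p)}.
Proof.
move=> p_gt0 t_gt0 du.
have g_cont x : 0 < x -> x <= t -> {for x, continuous (fun y => u y - eta * y `^ p)}.
  move=> x0 xt; apply/differentiable_continuous/derivable1_diffP.
  by have [] := is_derive_subr_scale_powR u eta p x x0 (du x _); rewrite // in_itv /= ltW.
apply/continuous_within_itvP => //; split.
- by move=> x; rewrite in_itv /= => /andP[x0 xt]; apply: g_cont => //; apply: ltW.
- rewrite powR0 ?gt_eqF //; apply: cvgB.
    apply/cvg_at_right_filter/differentiable_continuous/derivable1_diffP/du.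
    by rewrite in_itv /= lexx ltW.
  by have := cvgMl_tmp (a := eta) (powR_cvg0 p_gt0); rewrite mulr0; apply.
- by apply: cvg_at_left_filter; apply: g_cont.
Qed.

Section Subsolution.
Variable beta : R.
Hypotheses (beta_gt0 : 0 < beta) (beta_lt1 : beta < 1).

Let exponent_gt0 : 0 < 1 / (1 - beta). Proof. by rewrite divr_gt0 // subr_gt0. Qed.

Lemma subsolution_le (eta c T : R) (F u : R -> R) :
  0 < eta -> 2 * eta `^ beta + eta * (1 / (1 - beta)) < c ->
  (forall t, t \in `[0, T] -> derivable u t 1) ->
  (forall t, t \in `[0, T] -> 0 <= u t) ->
  (forall t, t \in `[0, T] -> c * t `^ (beta / (1 - beta)) <= F t) ->
  (forall t, t \in `[0, T] -> F t - 2 * (u t) `^ beta <= derive1 u t) ->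
  forall t, t \in `[0, T] -> eta * t `^ (1 / (1 - beta)) <= u t.
Proof.
move=> eta_gt0 + du u_ge0 F_ge u_super t.
rewrite in_itv /= => + /andP[t_ge0 t_le_T].
have beta1_gt0 : 0 < 1 - beta by rewrite subr_gt0.
have [p p_def] : {p | p = 1 / (1 - beta)} by exists (1 / (1 - beta)).
rewrite -p_def => eta_small.
have p_gt0 : 0 < p by rewrite p_def.
have p_sub1 : p - 1 = beta / (1 - beta) by rewrite p_def; field; rewrite gt_eqF.
have p_beta : p * beta = p - 1 by rewrite p_sub1 p_def; field; rewrite gt_eqF.
have in0T x : 0 <= x -> x <= t -> x \in `[0, T].
  by move=> x0 xt; rewrite in_itv /= x0 (le_trans xt).
have du0t x : x \in `]0, t] -> is_derive x 1 (fun y => u y - eta * y `^ p)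
    ('D_1 u x - eta * (p * x `^ (p - 1))).
  rewrite in_itv /= => /andP[x0 xt].
  by apply: (is_derive_subr_scale_powR u eta p x x0); apply/du/in0T => //; exact: ltW.
have [->|t_gt0] := eqVneq t 0.
  by rewrite powR0 ?gt_eqF // mulr0; apply: u_ge0; rewrite in0T.
rewrite -subr_ge0.
apply: (@ge0_of_derive1_gt0_where_neg (fun y => u y - eta * y `^ p) t t_ge0).
- apply: continuous_subr_scale_powR => // [|x]; first by rewrite lt_neqAle eq_sym t_gt0.
  by rewrite in_itv /= => /andP[x0 xt]; apply: du; rewrite in0T.
- by move=> x /du0t [].
- move=> x x0t u_lt; rewrite derive1E; have [_ ->] := du0t x x0t.
  move: x0t; rewrite in_itv /= => /andP[x_gt0 x_le_t].
  have x0T := in0T x (ltW x_gt0) x_le_t.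
  have ux_beta : u x `^ beta < eta `^ beta * x `^ (p - 1).
    rewrite -p_beta powRrM -powRM ?powR_ge0 ?(ltW eta_gt0) //.
    by apply: gt0_ltr_powR; rewrite ?nnegrE ?u_ge0 ?mulr_ge0 ?powR_ge0 ?(ltW eta_gt0) //; lra.
  have := u_super x x0T; have := F_ge x x0T; rewrite -p_sub1 -derive1E.
  have : 0 <= x `^ (p - 1) by apply: powR_ge0.
  nra.
- by rewrite powR0 ?gt_eqF // mulr0 subr0; apply: u_ge0; rewrite in0T.
Qed.

(* Chosen so that [rate^beta = base] and [rate <= base], whence
   [2 rate^beta + rate p <= base (2 + p) = c/(c+1) < c]. *)
Definition subsolution_base (c : R) : R := c / (c + 1) / (2 + 1 / (1 - beta)).

Definition subsolution_rate (c : R) : R := subsolution_base c `^ (1 / beta).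

Lemma subsolution_base_gt0 c : 0 < c -> 0 < subsolution_base c.
Proof. by move=> c_gt0; rewrite !divr_gt0 ?addr_gt0. Qed.

Lemma subsolution_base_lt1 c : 0 < c -> subsolution_base c < 1.
Proof.
move=> c_gt0; rewrite ltr_pdivrMr ?addr_gt0 // mul1r ltr_pdivrMr ?addr_gt0 //.
have := exponent_gt0; nra.
Qed.

Lemma subsolution_base_lt a b : 0 < a -> a < b -> subsolution_base a < subsolution_base b.
Proof.
move=> a_gt0 ab; rewrite /subsolution_base ltr_pM2r ?invr_gt0 ?addr_gt0 //.
rewrite ltr_pdivrMr ?addr_gt0 // mulrAC ltr_pdivlMr; nra.
Qed.

Lemma subsolution_rate_gt0 c : 0 < c -> 0 < subsolution_rate c.
Proof. by move=> c_gt0; apply/powR_gt0/subsolution_base_gt0. Qed.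

Lemma subsolution_rate_lt a b : 0 < a -> a < b -> subsolution_rate a < subsolution_rate b.
Proof.
move=> a_gt0 ab; apply: gt0_ltr_powR; rewrite ?divr_gt0 ?nnegrE ?ltW ?subsolution_base_lt //.
  exact: subsolution_base_gt0.
by apply: subsolution_base_gt0; apply: lt_trans ab.
Qed.

Lemma subsolution_rate_small c :
  0 < c -> 2 * subsolution_rate c `^ beta + subsolution_rate c * (1 / (1 - beta)) < c.
Proof.
move=> c_gt0; have q_gt0 := subsolution_base_gt0 c c_gt0.
have rate_beta : subsolution_rate c `^ beta = subsolution_base c.
  by rewrite -powRrM mul1r mulVf ?gt_eqF // powRr1 // ltW.
have rate_le : subsolution_rate c <= subsolution_base c.
  apply: ge1r_powR; first by rewrite q_gt0 ltW // subsolution_base_lt1.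
  by rewrite ler_pdivlMr // mul1r ltW.
have base_mul : subsolution_base c * (2 + 1 / (1 - beta)) = c / (c + 1).
  by rewrite divfK // gt_eqF // addr_gt0.
have : c / (c + 1) < c by rewrite ltr_pdivrMr ?addr_gt0 //; nra.
rewrite rate_beta; have := exponent_gt0; nra.
Qed.

End Subsolution.
End Comparison.

Theorem lemmaA12 (R : realType) (beta : R) (hb0 : 0 < beta) (hb1 : beta < 1) :
  exists eta1 : R -> R,
    (forall c : R, 0 < c -> 0 < eta1 c) /\
    (forall a b : R, 0 < a -> a < b -> eta1 a < eta1 b) /\
    (forall (T c : R) (F u : R -> R),
       0 < T -> 0 < c ->
       {within `[0, T], continuous F} ->
       (forall t, t \in `[0, T] -> 0 <= F t) ->
       (forall t, t \in `[0, T] -> derivable u t 1) ->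
       {within `[0, T], continuous derive1 u} ->
       (forall t, t \in `[0, T] -> 0 <= u t) ->
       (forall t, t \in `[0, T] -> c * t `^ (beta / (1 - beta)) <= F t) ->
       (forall t, t \in `[0, T] -> F t - 2 * (u t) `^ beta <= derive1 u t) ->
       forall t, t \in `[0, T] -> eta1 c * t `^ (1 / (1 - beta)) <= u t).
Proof.
exists (subsolution_rate beta); split; [|split].
- exact: subsolution_rate_gt0.
- exact: subsolution_rate_lt.
-
  move=> T c F u _ c_gt0 _ _ du _ u_ge0 F_ge u_super.
  apply: (@subsolution_le _ beta hb0 hb1 _ c T F u) => //.
  - exact: subsolution_rate_gt0.
  - exact: subsolution_rate_small.
Qed.
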